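(* Let $A$ be an evolution algebra over a commutative ring $R$ with finite basis $\{x_1,\dots,x_N\}$ and structure coefficients $c_{ki}$ (so $x_i^2=\sum_{k=1}^N c_{ki}x_k$ and $x_ix_j=0$ for $i\neq j$). If $A$ is nil, then for each $1\le i\le N$ there exists a positive integer $k_i$ such that $c_{ii}^{k_i}=0$ in $R$.
   Context: An evolution algebra over a commutative ring $R$ is a free $R$-module $A$ with basis $\{x_i : i\in I\}$ equipped with the $R$-bilinear multiplication determined by $x_ix_j=0$ for $i\ne j$ and $x_i^2=\sum_{k\in I}c_{ki}x_k$ with $c_{ki}\in R$ (finitely many nonzero for each $i$); the $c_{ki}$ are the structure coefficients. The multiplication is commutative but not assumed associative. Principal powers of $a\in A$ are $a^1=a$, $a^n=a^{n-1}a$ for $n\ge 2$. $A$ is nil if for every $a\in A$ there is $n\in\mathbb{N}$ with $a^n=0$. *)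

From HB Require Import structures.
From mathcomp Require Import all_boot all_order all_algebra.
Set Implicit Arguments. Unset Strict Implicit. Unset Printing Implicit Defensive.
Import GRing.Theory.
Local Open Scope ring_scope.

(* An evolution algebra over R with finite basis x_0..x_{N-1} and structure
   matrix C (C k i = c_{ki}, i.e. x_i^2 = sum_k C k i x_k) is the free module
   'rV[R]_N (coordinates w.r.t. the basis) with the bilinear product below. *)
Definition evo_mul (R : comPzRingType) (N : nat) (C : 'M[R]_N)
  (a b : 'rV[R]_N) : 'rV[R]_N :=
  \row_(k < N) \sum_(i < N) a 0 i * b 0 i * C k i.

(* Principal powers: evo_pow C a n = a^(n+1); a^1 = a, a^(n+1) = a^n a. *)
Fixpoint evo_pow (R : comPzRingType) (N : nat) (C : 'M[R]_N)
  (a : 'rV[R]_N) (n : nat) : 'rV[R]_N :=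
  match n with
  | 0 => a
  | n'.+1 => evo_mul C (evo_pow C a n') a
  end.

Definition evo_nil (R : comPzRingType) (N : nat) (C : 'M[R]_N) : Prop :=
  forall a : 'rV[R]_N, exists n : nat, evo_pow C a n = 0.

From HB Require Import structures.
From mathcomp Require Import all_boot all_order all_algebra.
Import GRing.Theory.
Local Open Scope ring_scope.

(* The x_i-coordinate of a x_i is a_i c_ii, so that of the principal power
   x_i^(n+1) is c_ii^n; if x_i^(n+1) = 0 then c_ii^(n+1) = c_ii c_ii^n = 0. *)

Section BasisPowers.

Variables (R : comPzRingType) (N : nat) (C : 'M[R]_N).

Lemma evo_mul_delta_coord (a : 'rV[R]_N) (i : 'I_N) :
  evo_mul C a (delta_mx 0 i) 0 i = a 0 i * C i i.
Proof.
rewrite mxE (bigD1 i) //= big1 => [|j /negbTE ji].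
  by rewrite mxE !eqxx mulr1 addr0.
by rewrite mxE ji andbF mulr0 mul0r.
Qed.

Lemma evo_pow_delta_coord (i : 'I_N) (n : nat) :
  evo_pow C (delta_mx 0 i) n 0 i = C i i ^+ n.
Proof.
elim: n => [|n IHn] /=; first by rewrite mxE !eqxx expr0.
by rewrite evo_mul_delta_coord IHn exprSr.
Qed.

End BasisPowers.

Theorem lemma2p4 (R : comPzRingType) (N : nat) (C : 'M[R]_N) :
  evo_nil C -> forall i : 'I_N, exists k : nat, (0 < k)%N /\ C i i ^+ k = 0.
Proof.
move=> nilC i; have [n pow0] := nilC (delta_mx 0 i).
exists n.+1; split => //.
by rewrite exprS -(@evo_pow_delta_coord _ _ C i n) pow0 mxE mulr0.
Qed.
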